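(* Let $L$ be a subspace of $\bigwedge^{k}V$. If $N_{j\to i}L=L$ for all distinct $i,j\in[n]$, then $L$ has a basis consisting of monomials $e_S=e_{s_1}\wedge\cdots\wedge e_{s_k}$ ($S=\{s_1<\cdots<s_k\}\subseteq[n]$).
   Context: $\mathbb{F}$ is a field (assumed throughout the paper, for expository purposes, to have characteristic not $2$), $V$ is an $n$-dimensional $\mathbb{F}$-vector space with a fixed basis $e_1,\dots,e_n$, and $\bigwedge V$ its exterior algebra. For $j\in[n]$, $V^{(j)}$ is the span of $\{e_h:h\neq j\}$. Slow shift: for distinct $i,j\in[n]$ and nonzero $m\in\bigwedge^kV$, write uniquely $m=x+e_j\wedge y$ with $x\in\bigwedge^kV^{(j)}$, $y\in\bigwedge^{k-1}V^{(j)}$, and set $N_{j\to i}m=x+e_i\wedge y$ if this is nonzero, and $N_{j\to i}m=e_j\wedge y$ otherwise (the limit as $t\to0$ of the projective action of the linear map $e_j\mapsto e_i+te_j$ fixing the other $e_h$). For a subspace $L$ of $\bigwedge^kV$, $N_{j\to i}L$ is the span of $\{N_{j\to i}m:m\in L\setminus\{0\}\}$. *)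

From HB Require Import structures.
From mathcomp Require Import all_boot all_order all_algebra.
Set Implicit Arguments. Unset Strict Implicit. Unset Printing Implicit Defensive.
Import GRing.Theory.
Local Open Scope ring_scope.

(* The exterior algebra /\V of V = F^n (basis e_0,...,e_{n-1}), realized
   concretely in the monomial basis: an element is the family of its
   coordinates on the monomials e_S, S a subset of [n]
   (e_S = e_{s_1} /\ ... /\ e_{s_k} with s_1 < ... < s_k). *)
Definition ext (F : fieldType) (n : nat) := {ffun {set 'I_n} -> F^o}.

Definition emono (F : fieldType) (n : nat) (S : {set 'I_n}) : ext F n :=
  [ffun T : {set 'I_n} => (T == S)%:R].

Definition ext_k (F : fieldType) (n k : nat) : {vspace ext F n} :=
  <<[seq emono F A | A <- enum [set A : {set 'I_n} | #|A| == k]]>>%VS.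

(* sign with e_i /\ e_T = (-1)^#{t in T | t < i} e_{T u {i}} for i \notin T *)
Definition wsign (F : fieldType) (n : nat) (i : 'I_n) (T : {set 'I_n}) : F :=
  (-1) ^+ #|[set t in T | (t < i)%N]|.

(* left multiplication by the basis vector e_i:
   e_i /\ e_T = wsign i T e_{T u {i}} if i \notin T, and 0 if i \in T *)
Definition wedge_e (F : fieldType) (n : nat) (i : 'I_n) (m : ext F n) : ext F n :=
  [ffun S : {set 'I_n} => if i \in S then wsign F i (S :\ i) * m (S :\ i) else 0].

(* unique decomposition m = x + e_j /\ y with x, y not involving e_j *)
Definition xpart (F : fieldType) (n : nat) (j : 'I_n) (m : ext F n) : ext F n :=
  [ffun S : {set 'I_n} => if j \in S then 0 else m S].
Definition ypart (F : fieldType) (n : nat) (j : 'I_n) (m : ext F n) : ext F n :=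
  [ffun T : {set 'I_n} => if j \in T then 0 else wsign F j T * m (j |: T)].

Definition slow_shift (F : fieldType) (n : nat) (j i : 'I_n) (m : ext F n) : ext F n :=
  let v := xpart j m + wedge_e i (ypart j m) in
  if v != 0 then v else wedge_e j (ypart j m).

(* membership in N_{j -> i} L = span of { N_{j->i} m : m in L, m <> 0 }:
   finite linear combinations of such vectors *)
Definition in_shift (F : fieldType) (n : nat) (j i : 'I_n) (L : {vspace ext F n})
  (v : ext F n) : Prop :=
  exists s : seq (ext F n),
    (forall w, w \in s -> exists2 m, (m \in L) && (m != 0) & w = slow_shift j i m)
    /\ v \in <<s>>%VS.

From mathcomp Require Import all_boot all_order all_algebra.
Set Implicit Arguments. Unset Strict Implicit. Unset Printing Implicit Defensive.
Import GRing.Theory.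
Local Open Scope ring_scope.

(* A subspace of /\V that is stable under every projection x + e_j /\ y |-> x
   (killing the monomials that contain e_j) is also stable under the
   complementary projections, and composing them over all j isolates a single
   coordinate m_S e_S; so it is spanned by the monomials it contains.
   Shift invariance gives this stability: for m = x + e_j /\ y in L, either
   N_{j->i} m = e_j /\ y, or N_{j->i} m = x + e_i /\ y and then
   N_{j->i} (m - N_{j->i} m) = N_{j->i} (e_j /\ y - e_i /\ y) = e_j /\ y. *)

Section Monomials.
Variables (F : fieldType) (n : nat).
Implicit Types (v : ext F n) (S : {set 'I_n}).

Lemma span_emono_notin (s : seq {set 'I_n}) v S :
  v \in <<[seq emono F A | A <- s]>>%VS -> S \notin s -> v S = 0.
Proof.
move=> sv Ss; pose X := in_tuple [seq emono F A | A <- s].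
rewrite (coord_span (X := X) sv) sum_ffunE big1 // => i _.
have i_s : (i < size s)%N by rewrite -(size_map (@emono F n)).
rewrite ffunE (nth_map set0) // ffunE; case: eqP => [eS|_]; last by rewrite scaler0.
by case/negP: Ss; rewrite eS mem_nth.
Qed.

Lemma ext_k_coord_eq0 k v S : v \in ext_k F n k -> #|S| != k -> v S = 0.
Proof. by move=> /span_emono_notin vk Sk; apply: vk; rewrite mem_enum inE. Qed.

Lemma emono_coord S : emono F S S = 1.
Proof. by rewrite ffunE eqxx. Qed.

Lemma emono_ext_k_card k S : emono F S \in ext_k F n k -> #|S| = k.
Proof.
move=> Sk; apply/eqP/negPn/negP => /(ext_k_coord_eq0 Sk)/eqP.
by rewrite emono_coord oner_eq0.
Qed.

Lemma free_emono (s : seq {set 'I_n}) : uniq s -> free [seq emono F A | A <- s].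
Proof.
elim: s => [|A s IHs] /=; first by rewrite nil_free.
case/andP=> As us; rewrite free_cons IHs // andbT.
by apply/negP => /span_emono_notin/(_ As)/eqP; rewrite emono_coord oner_eq0.
Qed.

Lemma ext_emono_sum v : v = \sum_S v S *: emono F S.
Proof.
apply/ffunP => T; rewrite sum_ffunE (bigD1 T) //= big1 => [|S /negbTE nST].
  by rewrite ffunE emono_coord addr0 [RHS]mulr1.
by rewrite !ffunE eq_sym nST scaler0.
Qed.

Definition restrict (P : pred {set 'I_n}) v : ext F n :=
  [ffun T => if P T then v T else 0].

Lemma eq_restrict (P Q : pred {set 'I_n}) v : P =1 Q -> restrict P v = restrict Q v.
Proof. by move=> PQ; apply/ffunP => T; rewrite !ffunE PQ. Qed.

Lemma restrict_pred1 S v : restrict (pred1 S) v = v S *: emono F S.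
Proof.
apply/ffunP => T; rewrite !ffunE /=.
by case: eqP => [->|_]; rewrite ?[RHS]mulr1 ?scaler0.
Qed.

Lemma restrict_and (P Q : pred {set 'I_n}) v :
  restrict (fun T => P T && Q T) v = restrict P (restrict Q v).
Proof. by apply/ffunP => T; rewrite !ffunE /=; case: (P T); case: (Q T). Qed.

Lemma xpart_restrict j v : xpart j v = restrict (fun T => j \notin T) v.
Proof. by apply/ffunP => T; rewrite !ffunE /=; case: (j \in T). Qed.

Lemma restrict_mem_xpart j v : restrict (fun T => j \in T) v = v - xpart j v.
Proof. by apply/ffunP => T; rewrite !ffunE; case: (j \in T); rewrite ?subr0 ?subrr. Qed.

Section XpartStable.
Variable L : {vspace ext F n}.
Hypothesis xpartL : forall j, {in L, forall v, xpart j v \in L}.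

Lemma restrict_agree_mem S (s : seq 'I_n) v : v \in L ->
  restrict (fun T => all (fun j => (j \in T) == (j \in S)) s) v \in L.
Proof.
move=> Lv; elim: s => [|j s IHs].
  by rewrite (_ : restrict _ v = v) //; apply/ffunP => T; rewrite ffunE.
set Q := (fun T => _) in IHs.
have L_notin := xpartL j IHs.
have L_in : restrict (fun T => j \in T) (restrict Q v) \in L.
  by rewrite restrict_mem_xpart; apply: memvB.
rewrite xpart_restrict -restrict_and in L_notin; rewrite -restrict_and in L_in.
case jS: (j \in S).
- rewrite (@eq_restrict _ (fun T => (j \in T) && Q T)) // => T /=.
  by rewrite jS eqb_id.
- rewrite (@eq_restrict _ (fun T => (j \notin T) && Q T)) // => T /=.
  by rewrite jS eqbF_neg.
Qed.

Lemma emono_mem v S : v \in L -> v S != 0 -> emono F S \in L.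
Proof.
move=> Lv vS0; have := restrict_agree_mem S (enum 'I_n) Lv.
rewrite (@eq_restrict _ (pred1 S)) => [|T /=]; last first.
  apply/allP/eqP => [agree|->]; last by move=> j _.
  by apply/setP => j; apply/eqP/agree; rewrite mem_enum.
rewrite restrict_pred1 => /(memvZ ((v S : F)^-1)).
by rewrite scalerA mulVf // scale1r.
Qed.

Lemma monomial_basis :
  basis_of L [seq emono F A | A <- enum [set A | emono F A \in L]].
Proof.
rewrite /basis_of free_emono ?enum_uniq // andbT eqEsubv; apply/andP; split.
  by apply/span_subvP => w /mapP [A]; rewrite mem_enum inE => LA ->.
apply/subvP => v Lv; rewrite (ext_emono_sum v); apply: memv_suml => A _.
have [->|vA0] := eqVneq (v A) 0; first by rewrite scale0r mem0v.
by apply/memvZ/memv_span/map_f; rewrite mem_enum inE (emono_mem Lv vA0).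
Qed.

End XpartStable.
End Monomials.

Section SlowShift.
Variables (F : fieldType) (n : nat).
Implicit Types (m v y : ext F n) (S T : {set 'I_n}) (i j : 'I_n).

Definition avoids j y := forall T, j \in T -> y T = 0.

Lemma wsignK i T : wsign F i T * wsign F i T = 1.
Proof. by rewrite /wsign -exprD addnn -mul2n exprM sqrrN !expr1n. Qed.

Lemma ypart_avoids j m : avoids j (ypart j m).
Proof. by move=> T jT; rewrite ffunE jT. Qed.

Lemma xpart_ypart_decomp j m : m = xpart j m + wedge_e j (ypart j m).
Proof.
apply/ffunP => S; rewrite !ffunE; case: ifP => jS; last by rewrite addr0.
by rewrite setD1K // !inE eqxx mulrA wsignK mul1r add0r.
Qed.

Lemma xpart_wedge_self j y : xpart j (wedge_e j y) = 0.
Proof. by apply/ffunP => S; rewrite !ffunE; case: ifP => // ->. Qed.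

Lemma ypart_wedge_self j y : avoids j y -> ypart j (wedge_e j y) = y.
Proof.
move=> yj; apply/ffunP => T; rewrite !ffunE; case: ifP => jT; first by rewrite yj.
by rewrite setU11 setU1K ?jT // mulrA wsignK mul1r.
Qed.

Lemma xpart_wedge_other i j y : i != j -> avoids j y ->
  xpart j (wedge_e i y) = wedge_e i y.
Proof.
move=> ij yj; apply/ffunP => S; rewrite !ffunE; case: ifP => // jS.
by case: ifP => // iS; rewrite yj ?mulr0 // !inE jS eq_sym ij.
Qed.

Lemma ypart_wedge_other i j y : i != j -> avoids j y -> ypart j (wedge_e i y) = 0.
Proof.
move=> ij yj; apply/ffunP => T; rewrite !ffunE; case: ifP => // jT.
by case: ifP => iT; rewrite ?yj ?mulr0 // !inE eq_sym ij eqxx.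
Qed.

Lemma xpartB j m1 m2 : xpart j (m1 - m2) = xpart j m1 - xpart j m2.
Proof. by apply/ffunP => S; rewrite !ffunE; case: ifP; rewrite ?subr0. Qed.

Lemma ypartB j m1 m2 : ypart j (m1 - m2) = ypart j m1 - ypart j m2.
Proof. by apply/ffunP => S; rewrite !ffunE; case: ifP; rewrite ?subr0 // mulrBr. Qed.

Lemma ypart0 j : ypart j (0 : ext F n) = 0.
Proof. by apply/ffunP => S; rewrite !ffunE; case: ifP; rewrite // mulr0. Qed.

Lemma wedge_e0 i : wedge_e i (0 : ext F n) = 0.
Proof. by apply/ffunP => S; rewrite !ffunE; case: ifP; rewrite // mulr0. Qed.

Lemma ypart_wedge_diff i j y : i != j -> avoids j y ->
  ypart j (wedge_e j y - wedge_e i y) = y.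
Proof.
by move=> ij yj; rewrite ypartB ypart_wedge_self // ypart_wedge_other // subr0.
Qed.

Lemma slow_shift_wedge_diff i j y : i != j -> avoids j y ->
  slow_shift j i (wedge_e j y - wedge_e i y) = wedge_e j y.
Proof.
move=> ij yj; rewrite /slow_shift ypart_wedge_diff // xpartB xpart_wedge_self.
by rewrite xpart_wedge_other // add0r addNr eqxx.
Qed.

Lemma xpart_ext_k_unique_index k j v : (forall i, i = j) -> v \in ext_k F n k ->
  xpart j v = if k == 0%N then v else 0.
Proof.
move=> only_j vk; apply/ffunP => T; rewrite !ffunE.
have T_j : T = if j \in T then [set j] else set0.
  apply/setP => x; rewrite (only_j x); case: ifP => jT; rewrite !inE ?eqxx //.
case: ifP => jT; case: eqP => [k0|/eqP k0]; rewrite ?ffunE //.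
- by rewrite (ext_k_coord_eq0 vk) // T_j jT cards1 k0.
- by rewrite (ext_k_coord_eq0 vk) // T_j jT cards0 eq_sym.
Qed.

Variables (L : {vspace ext F n}) (k : nat).
Hypothesis L_k : (L <= ext_k F n k)%VS.
Hypothesis shiftL :
  forall i j, i != j -> {in L, forall m, m != 0 -> slow_shift j i m \in L}.

Lemma wedge_ypart_mem i j m : i != j -> m \in L -> wedge_e j (ypart j m) \in L.
Proof.
move=> ij Lm; have [->|m0] := eqVneq m 0; first by rewrite ypart0 wedge_e0 mem0v.
set y := ypart j m; have yj : avoids j y by apply: ypart_avoids.
have := shiftL ij Lm m0; rewrite /slow_shift -/y; case: ifP => // _ L_shift.
set w := wedge_e j y - wedge_e i y.
have Lw : w \in L.
  have -> : w = m - (xpart j m + wedge_e i y).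
    by rewrite {1}(xpart_ypart_decomp j m) opprD addrACA subrr add0r.
  exact: memvB.
have [w0|w_neq0] := eqVneq w 0.
  by rewrite -(ypart_wedge_diff ij yj) -/w w0 ypart0 wedge_e0 mem0v.
by rewrite -(slow_shift_wedge_diff ij yj); apply: shiftL.
Qed.

Lemma xpart_mem j : {in L, forall m, xpart j m \in L}.
Proof.
move=> m Lm; have [i ij|only_j] := pickP (fun i => i != j).
  have -> : xpart j m = m - wedge_e j (ypart j m).
    by rewrite {2}(xpart_ypart_decomp j m) addrK.
  by rewrite memvB // (wedge_ypart_mem ij).
(* n = 1: there is no shift, but the grading makes xpart j trivial on L. *)
have only_j' i : i = j by apply/eqP/negbFE/only_j.
rewrite (xpart_ext_k_unique_index only_j' (subvP L_k _ Lm)).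
by case: eqP; rewrite ?mem0v.
Qed.

End SlowShift.

Lemma in_shift_slow_shift (F : fieldType) (n : nat) (j i : 'I_n)
    (L : {vspace ext F n}) (m : ext F n) :
  m \in L -> m != 0 -> in_shift j i L (slow_shift j i m).
Proof.
move=> Lm m0; exists [:: slow_shift j i m]; split; last exact/memv_span/mem_head.
by move=> w; rewrite inE => /eqP ->; exists m; rewrite ?Lm.
Qed.

Theorem corollary3p14 (F : fieldType) (n k : nat) (L : {vspace ext F n}) :
  (2%:R != 0 :> F) ->
  (L <= ext_k F n k)%VS ->
  (forall i j : 'I_n, i != j ->
     forall v : ext F n, in_shift j i L v <-> v \in L) ->
  exists B : seq {set 'I_n},
    all (fun A : {set 'I_n} => #|A| == k) B /\ basis_of L [seq emono F A | A <- B].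
Proof.
(* char F <> 2 is only an expository assumption of the paper. *)
move=> _ L_k shift_inv.
have shiftL i j : i != j -> {in L, forall m, m != 0 -> slow_shift j i m \in L}.
  by move=> ij m Lm m0; apply/(shift_inv i j ij)/in_shift_slow_shift.
exists (enum [set A | emono F A \in L]); split; last first.
  exact/monomial_basis/(xpart_mem L_k shiftL).
apply/allP => A; rewrite mem_enum inE => LA.
by rewrite (emono_ext_k_card (subvP L_k _ LA)).
Qed.
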